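(* Let $1\le r\le s\le t$ and let $u=ABCd$, $v=A'B'C'd'$ be vertices of $E3C(r,s,t)$ with $A=A'$, $B\ne B'$, $C\ne C'$ and $d\ne d'$. Then there exist $2r+2$ pairwise internally disjoint $u$–$v$ paths in $E3C(r,s,t)$, each of length at most $s+t+7$.
   Context: The exchanged 3-ary $n$-cube $E3C(r,s,t)$ ($r,s,t\ge1$, $n=r+s+t+1$): vertices are strings written $x=ABCd$ with $A\in\{0,1,2\}^r$, $B\in\{0,1,2\}^s$, $C\in\{0,1,2\}^t$, $d\in\{0,1,2\}$. Two distinct vertices $x=ABCd$, $y=A'B'C'd'$ are adjacent iff one of: (E0) $A=A',B=B',C=C'$ and $d\ne d'$; (E1) $d=d'=0$, $A=A'$, $B=B'$ and $C,C'$ differ in exactly one position; (E2) $d=d'=1$, $A=A'$, $C=C'$ and $B,B'$ differ in exactly one position; (E3) $d=d'=2$, $B=B'$, $C=C'$ and $A,A'$ differ in exactly one position. Paths are internally disjoint if they share no vertices other than their endpoints; length = number of edges. *)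

From mathcomp Require Import all_boot.
Set Implicit Arguments. Unset Strict Implicit. Unset Printing Implicit Defensive.

Definition word (n : nat) := n.-tuple 'I_3.

Definition e3c_vertex (r s t : nat) : finType :=
  (word r * word s * word t * 'I_3)%type.

Definition differ1 (n : nat) (A A' : word n) : bool :=
  #|[pred i : 'I_n | tnth A i != tnth A' i]| == 1.

Definition e3c_adj (r s t : nat) : rel (e3c_vertex r s t) :=
  fun x y =>
    let: (A, B, C, d) := x in
    let: (A', B', C', d') := y in
    [|| [&& A == A', B == B', C == C' & d != d'],
        [&& d == 0%N :> nat, d' == 0%N :> nat, A == A', B == B' & differ1 C C'],
        [&& d == 1%N :> nat, d' == 1%N :> nat, A == A', C == C' & differ1 B B']
      | [&& d == 2%N :> nat, d' == 2%N :> nat, B == B', C == C' & differ1 A A']].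

(* A u-v path is represented by the sequence p of vertices after u,
   i.e. the path is u :: p; it is a simple path ending at v.
   Its length (number of edges) is size p. *)
Definition is_uv_path (r s t : nat) (u v : e3c_vertex r s t)
    (p : seq (e3c_vertex r s t)) : Prop :=
  [/\ path (@e3c_adj r s t) u p, last u p = v & uniq (u :: p)].

(* Internal vertices of such a path: those of p other than v (u is not in p). *)
Definition internally_disjoint (r s t : nat) (v : e3c_vertex r s t)
    (p q : seq (e3c_vertex r s t)) : Prop :=
  forall x, x \in p -> x \in q -> x = v.

From mathcomp Require Import all_boot zify.
Set Implicit Arguments. Unset Strict Implicit. Unset Printing Implicit Defensive.

(* Within a block the letters of a word can be corrected one at a time, giving
   walks of length at most s (block B, level 1) and t (block C, level 0).
   Exchanging B with C and reversing walks leaves the cases d = 0, d' = 1, 2.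
   Besides a walk correcting B and then C there is one more untagged walk (C
   before B if d' = 2, a detour through level 2 if d' = 1), and 2r walks tagged
   by one of the 2r neighbours of a word obtained by changing one of its first
   r letters: neighbours of A if d' = 2, of C and of B' if d' = 1.  The tag
   persists along the walk, which makes all walks internally disjoint;
   shortening them to paths preserves this. *)

Section Words.
Variable n : nat.
Implicit Types (w z : word n) (i q : nat) (x : 'I_3).

Definition letter w i : 'I_3 := nth ord0 w i.

Definition set_letter w i x : word n :=
  [tuple if (j : nat) == i then x else tnth w j | j < n].

Lemma letter_set w i x q :
  q < n -> letter (set_letter w i x) q = if q == i then x else letter w q.
Proof.
move=> hq; rewrite /letter -[q]/(nat_of_ord (Ordinal hq)) -!tnth_nth.
by rewrite tnth_mktuple.
Qed.

Lemma eq_word w z : (forall q, q < n -> letter w q = letter z q) -> w = z.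
Proof. by move=> h; apply: eq_from_tnth => j; rewrite !(tnth_nth ord0); apply: h. Qed.

Lemma differ1C w z : differ1 w z = differ1 z w.
Proof. by rewrite /differ1; congr (_ == _); apply: eq_card => j; rewrite !inE eq_sym. Qed.

Lemma differ1_set_letter w i x : i < n -> x != letter w i -> differ1 w (set_letter w i x).
Proof.
move=> hi hx; rewrite /differ1 (@eq_card _ _ (pred1 (Ordinal hi))) ?card1 // => j.
rewrite !inE !(tnth_nth ord0) -/(letter _ _) -/(letter _ _) letter_set //.
have -> : (j == Ordinal hi) = ((j : nat) == i) by [].
by case: (eqVneq (j : nat) i) => [->|_]; rewrite ?eqxx // eq_sym.
Qed.

Lemma set_letter_neq w i x : i < n -> x != letter w i -> set_letter w i x != w.
Proof.
move=> hi hx; apply: contra hx => /eqP/(congr1 (letter^~ i)).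
by rewrite letter_set // eqxx => ->.
Qed.

End Words.

Section Walks.
Variable n : nat.
Implicit Types (w z : word n) (i q : nat) (ps : seq nat).

Fixpoint walk_to w w' ps : seq (word n) :=
  if ps is p :: ps' then
    if letter w p == letter w' p then walk_to w w' ps'
    else set_letter w p (letter w' p) :: walk_to (set_letter w p (letter w' p)) w' ps'
  else [::].

Lemma path_walk_to w w' ps : all (fun p => p < n) ps -> path (@differ1 n) w (walk_to w w' ps).
Proof.
elim: ps w => //= p ps IH w /andP[hp hps].
case: eqP => [_|/eqP h]; first exact: IH.
by rewrite /= differ1_set_letter 1?eq_sym ?IH.
Qed.

Lemma size_walk_to w w' ps : size (walk_to w w' ps) <= size ps.
Proof. by elim: ps w => //= p ps IH w; case: ifP => _ //=; [exact: leqW | rewrite ltnS]. Qed.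

Lemma last_walk_to w w' ps : all (fun p => p < n) ps ->
  (forall q, q < n -> letter w q != letter w' q -> q \in ps) -> last w (walk_to w w' ps) = w'.
Proof.
elim: ps w => [|p ps IH] w /=.
  by move=> _ h; apply: eq_word => q hq; apply/eqP/negPn/negP => /(h q hq).
case/andP=> hp hps h; case: eqP => [e|_] /=; apply: IH => // q hq.
  by move=> hne; have := h q hq hne; rewrite inE; case: eqP => // qp; rewrite qp e eqxx in hne.
rewrite letter_set //; case: (eqVneq q p) => [->|nq]; first by rewrite eqxx.
by move=> /(h q hq); rewrite inE (negbTE nq).
Qed.

Lemma walk_to_perm w w' ps : perm_eq ps (iota 0 n) ->
  [/\ path (@differ1 n) w (walk_to w w' ps), last w (walk_to w w' ps) = w'
    & size (walk_to w w' ps) <= n].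
Proof.
move=> hps; have lt_ps : all (fun p => p < n) ps.
  by rewrite (perm_all _ hps); apply/allP => p; rewrite mem_iota.
split; first exact: path_walk_to.
  by apply: last_walk_to => // q hq _; rewrite (perm_mem hps) mem_iota.
by rewrite -{2}(size_iota 0 n) -(perm_size hps) size_walk_to.
Qed.

Lemma letter_walk_to_fixed w w' ps q : q < n -> letter w q = letter w' q ->
  {in walk_to w w' ps, forall z, letter z q = letter w' q}.
Proof.
move=> hq; elim: ps w => //= p ps IH w e z; case: ifP => _; first exact: IH.
have e' : letter (set_letter w p (letter w' p)) q = letter w' q.
  by rewrite letter_set //; case: eqP => [->|].
by rewrite inE => /orP[/eqP ->//|]; apply: IH.
Qed.

Lemma letter_walk_to_cons w w' ps q : q < n ->
  {in walk_to w w' (q :: ps), forall z, letter z q = letter w' q}.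
Proof.
move=> hq z /=; case: ifP => [/eqP e|_]; first exact: letter_walk_to_fixed.
have e : letter (set_letter w q (letter w' q)) q = letter w' q by rewrite letter_set // eqxx.
by rewrite inE => /orP[/eqP ->//|]; apply: letter_walk_to_fixed.
Qed.

Lemma letter_walk_to_rcons w w' ps q : q < n -> q \notin ps ->
  {in walk_to w w' (rcons ps q), forall z,
    letter z q = letter w q \/ z = last w (walk_to w w' (rcons ps q))}.
Proof.
move=> hq; elim: ps w => [|p ps IH] w /=.
  by move=> _ z; case: ifP => //= _; rewrite inE => /eqP ->; right.
rewrite inE negb_or => /andP[hpq hps] z; case: ifP => _; first exact: IH.
have e : letter (set_letter w p (letter w' p)) q = letter w q.
  by rewrite letter_set // (negbTE hpq).
by rewrite inE => /orP[/eqP ->|/(IH _ hps)]; [left | rewrite e].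
Qed.

Lemma walk_to_set_letter_head w w' ps i x :
  all (fun p => p < n) ps -> i < n -> x != letter w i ->
  set_letter w i x \in walk_to w w' ps -> set_letter w i x = head w (walk_to w w' ps).
Proof.
elim: ps w => //= p ps IH w /andP[hp hps] hi hx; case: ifP => [_|/negbT ne]; first exact: IH.
rewrite inE => /orP[/eqP -> // | hin] /=.
have e : letter (set_letter w p (letter w' p)) p = letter w' p by rewrite letter_set // eqxx.
have := letter_walk_to_fixed hp e hin; rewrite letter_set //.
case: eqP => [<- ex | _ ew]; last by rewrite ew eqxx in ne.
by rewrite ex.
Qed.

Lemma perm_iota_first j : j < n -> perm_eq (j :: rem j (iota 0 n)) (iota 0 n).
Proof. by move=> hj; rewrite perm_sym perm_to_rem // mem_iota. Qed.

Lemma perm_iota_last j : j < n -> perm_eq (rcons (rem j (iota 0 n)) j) (iota 0 n).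
Proof. by move=> hj; rewrite perm_rcons perm_iota_first. Qed.

End Walks.

Definition shift_letter (a : 'I_3) (b : bool) : 'I_3 := inord ((a + 1 + b) %% 3).

Lemma shift_letter_neq a b : shift_letter a b != a.
Proof. by case: a => [[|[|[|]]] //] ?; case: b; rewrite /shift_letter -val_eqE /= inordK. Qed.

Lemma shift_letter_inj a : injective (shift_letter a).
Proof.
by case: a => [[|[|[|]]] //] ? [] [] // /(congr1 val); rewrite /= !inordK.
Qed.

(* The indices k < 2n enumerate the 2n neighbours of w. *)
Definition nbr n (w : word n) k : word n :=
  set_letter w k./2 (shift_letter (letter w k./2) (odd k)).

Lemma half_lt_double k m : k < 2 * m -> k./2 < m.
Proof. by rewrite ltn_half_double -mul2n. Qed.

Section Neighbours.
Variables n m : nat.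
Hypothesis le_mn : m <= n.
Implicit Types (w : word n) (k l : nat).

Lemma half_lt_word k : k < 2 * m -> k./2 < n.
Proof. by move=> /half_lt_double/leq_trans; apply. Qed.

Lemma differ1_nbr w k : k < 2 * m -> differ1 w (nbr w k).
Proof. by move=> hk; apply: differ1_set_letter (shift_letter_neq _ _); apply: half_lt_word. Qed.

Lemma nbr_neq w k : k < 2 * m -> nbr w k != w.
Proof. by move=> hk; apply: set_letter_neq (shift_letter_neq _ _); apply: half_lt_word. Qed.

Lemma letter_nbr_inj w k l : k < 2 * m -> l < 2 * m ->
  letter (nbr w k) l./2 = letter (nbr w l) l./2 -> k = l.
Proof.
move=> hk hl; rewrite !letter_set ?half_lt_word // eqxx.
case: eqP => [e | _ h]; last first.
  by have := shift_letter_neq (letter w l./2) (odd l); rewrite -h eqxx.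
rewrite e => /shift_letter_inj eo.
by rewrite -(odd_double_half k) -(odd_double_half l) e eo.
Qed.

Lemma nbr_inj w k l : k < 2 * m -> l < 2 * m -> nbr w k = nbr w l -> k = l.
Proof. by move=> hk hl /(congr1 (fun z => letter z l./2)); apply: letter_nbr_inj. Qed.

Definition nbr_index w w' := find (fun k => nbr w k == w') (iota 0 (2 * m)).

Lemma nbr_index_lt w w' : nbr_index w w' < 2 * m -> nbr w (nbr_index w w') = w'.
Proof.
move=> lt; have /(nth_find 0) : has (fun k => nbr w k == w') (iota 0 (2 * m)).
  by rewrite has_find size_iota.
by rewrite nth_iota // => /eqP.
Qed.

Lemma nbr_indexP w w' k : k < 2 * m -> nbr w k = w' -> nbr_index w w' = k.
Proof.
move=> hk e; have lt : nbr_index w w' < 2 * m.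
  rewrite -[X in _ < X](size_iota 0 (2 * m)) -has_find.
  by apply/hasP; exists k; rewrite /= ?mem_iota ?e.
by apply: (nbr_inj (w := w) lt hk); rewrite (nbr_index_lt lt) e.
Qed.

End Neighbours.

Definition lev0 : 'I_3 := @Ordinal 3 0 isT.
Definition lev1 : 'I_3 := @Ordinal 3 1 isT.
Definition lev2 : 'I_3 := @Ordinal 3 2 isT.

Lemma lev_cases (d : 'I_3) : [\/ d = lev0, d = lev1 | d = lev2].
Proof.
by case: d => [[|[|[|?]]] ?] //; [constructor 1 | constructor 2 | constructor 3]; apply: val_inj.
Qed.

Arguments e3c_adj : simpl never.

Section Fans.
Variables r s t : nat.
Local Notation V := (e3c_vertex r s t).
Local Notation adj := (@e3c_adj r s t).

Lemma adj_sym : symmetric adj.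
Proof.
move=> [[[A B] C] d] [[[A' B'] C'] d'].
rewrite /e3c_adj !(eq_sym A) !(eq_sym B) !(eq_sym C) !(eq_sym d).
rewrite (differ1C C) (differ1C B) (differ1C A).
by congr (_ || (_ || (_ || _))); rewrite andbCA.
Qed.

Lemma adj_level A B C (d d' : 'I_3) : d != d' -> adj (A, B, C, d) (A, B, C, d').
Proof. by move=> h; rewrite /e3c_adj !eqxx h. Qed.

Lemma adj_C A B C C' : differ1 C C' -> adj (A, B, C, lev0) (A, B, C', lev0).
Proof. by move=> h; rewrite /e3c_adj !eqxx h /= orbT. Qed.

Lemma adj_B A B B' C : differ1 B B' -> adj (A, B, C, lev1) (A, B', C, lev1).
Proof. by move=> h; rewrite /e3c_adj !eqxx h /= !orbT. Qed.

Lemma adj_A A A' B C : differ1 A A' -> adj (A, B, C, lev2) (A', B, C, lev2).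
Proof. by move=> h; rewrite /e3c_adj !eqxx h /= !orbT. Qed.

Definition bounded_walk (u v : V) L (p : seq V) :=
  [/\ path adj u p, last u p = v & size p <= L].

Lemma bounded_walk_edge u v : adj u v -> bounded_walk u v 1 [:: v].
Proof. by rewrite /bounded_walk /= andbT. Qed.

Lemma bounded_walk_cons u w v L p :
  adj u w -> bounded_walk w v L p -> bounded_walk u v L.+1 (w :: p).
Proof. by move=> uw [pw lw sw]; split=> //=; rewrite uw. Qed.

Lemma bounded_walk_cat u w v L M p q :
  bounded_walk u w L p -> bounded_walk w v M q -> bounded_walk u v (L + M) (p ++ q).
Proof.
move=> [pp lp sp] [pq lq sq]; split; first by rewrite cat_path pp lp.
  by rewrite last_cat lp.
by rewrite size_cat leq_add.
Qed.

Lemma bounded_walk_le u v L M p : L <= M -> bounded_walk u v L p -> bounded_walk u v M p.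
Proof. by move=> LM [pp lp sp]; split=> //; apply: leq_trans LM. Qed.

Definition walk_fan (u v : V) L N (P : nat -> seq V) :=
  (forall k, k < N -> bounded_walk u v L (P k)) /\
  (forall k l, k < N -> l < N -> k != l -> internally_disjoint v (P k) (P l)).

Definition path_fan (u v : V) L N (P : nat -> seq V) :=
  (forall k, k < N -> is_uv_path u v (P k) /\ size (P k) <= L) /\
  (forall k l, k < N -> l < N -> k != l -> internally_disjoint v (P k) (P l)).

Lemma internally_disjoint_sym v (p q : seq V) :
  internally_disjoint v p q -> internally_disjoint v q p.
Proof. by move=> h x xq xp; apply: h. Qed.

Lemma walk_fan_extend u v L m P X Y :
  (forall k, k < m -> bounded_walk u v L (P k)) -> bounded_walk u v L X -> bounded_walk u v L Y ->
  (forall k l, k < m -> l < m -> k != l -> internally_disjoint v (P k) (P l)) ->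
  (forall k, k < m -> internally_disjoint v (P k) X) ->
  (forall k, k < m -> internally_disjoint v (P k) Y) ->
  internally_disjoint v X Y ->
  walk_fan u v L m.+2 (fun k => if k < m then P k else if k == m then X else Y).
Proof.
move=> Pw Xw Yw PP PX PY XY; split=> [k _ | k l hk hl hkl].
  by case: ifP => [/Pw // | _]; case: ifP.
case: (ltnP k m) => km; case: (ltnP l m) => lm; first exact: PP.
- by case: ifP => _; [apply: PX | apply: PY].
- by case: ifP => _; apply: internally_disjoint_sym; [apply: PX | apply: PY].
case: ifP => /eqP ek; case: ifP => /eqP el //.
- by move: hkl; rewrite ek el eqxx.
- exact: internally_disjoint_sym.
- by have ekl : k = l by [lia]; rewrite ekl eqxx in hkl.
Qed.

Lemma walk_fan_shorten u v L N P :
  walk_fan u v L N P -> path_fan u v L N (fun k => shorten u (P k)).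
Proof.
case=> walks disj; split=> [k hk | k l hk hl hkl x].
  have [pk <- sk] := walks k hk; case: (shortenP pk) => p' path_p' uniq_p' sub_p'.
  split; first by split.
  by apply: leq_trans sk; apply: uniq_leq_size sub_p'; case/andP: uniq_p'.
have [pk _ _] := walks k hk; have [pl _ _] := walks l hl.
case: (shortenP pk) => ? _ _ subk; case: (shortenP pl) => ? _ _ subl.
by move=> /subk xk /subl xl; apply: (disj k l).
Qed.

Lemma path_fan_rev u v L N P : u != v ->
  path_fan u v L N P -> path_fan v u L N (fun k => rev (belast u (P k))).
Proof.
move=> uv [paths disj].
have uniq_v k : k < N -> uniq (v :: belast u (P k)).
  by move=> hk; have [[_ e] + _] := paths k hk; rewrite lastI e rcons_uniq.
have mem_belast_P k x : k < N -> x \in belast u (P k) -> x = u \/ (x \in P k /\ x != v).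
  move=> hk hx; have /andP[vP _] := uniq_v k hk.
  case/orP: (mem_belast hx) => [/eqP -> | xP]; first by left.
  by right; split; last by apply: contraNneq vP => <-.
split=> [k hk | k l hk hl hkl x].
  have [[pk lk uk] sk] := paths k hk; split; last by rewrite size_rev size_belast.
  split; last by rewrite /= mem_rev rev_uniq; apply: uniq_v.
    by rewrite -lk rev_path (@eq_path _ _ adj) // => y z; apply: adj_sym.
  by case: (P k) lk => [/= e | y p _]; [rewrite e eqxx in uv | rewrite /= rev_cons last_rcons].
rewrite !mem_rev => /(mem_belast_P _ _ hk)[// | [xk xv]] /(mem_belast_P _ _ hl)[// | [xl _]].
by have e := disj k l hk hl hkl x xk xl; rewrite e eqxx in xv.
Qed.

End Fans.

Section Transport.
Variables r s t r' s' t' : nat.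
Variable f : e3c_vertex r s t -> e3c_vertex r' s' t'.
Hypotheses (f_inj : injective f) (f_adj : {homo f : x y / e3c_adj x y}).

Lemma walk_fan_map u v L N P :
  walk_fan u v L N P -> walk_fan (f u) (f v) L N (fun k => map f (P k)).
Proof.
case=> walks disj; split=> [k hk | k l hk hl hkl x].
  by have [pk lk sk] := walks k hk; rewrite /bounded_walk (homo_path f_adj) // last_map lk size_map.
by case/mapP=> y yk -> /mapP[z zl /f_inj yz]; rewrite (disj k l hk hl hkl y) // yz.
Qed.

End Transport.

(* Exchanging the B- and C-blocks exchanges the levels 0 and 1. *)
Definition swap_level (d : 'I_3) : 'I_3 :=
  if val d == 0 then lev1 else if val d == 1 then lev0 else d.

Definition swap_BC r s t (x : e3c_vertex r t s) : e3c_vertex r s t :=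
  let: (A, X, Y, d) := x in (A, Y, X, swap_level d).

Lemma swap_levelK : involutive swap_level.
Proof. by move=> d; case: (lev_cases d) => ->. Qed.

Lemma swap_level_inj : injective swap_level.
Proof. exact: can_inj swap_levelK. Qed.

Lemma swap_BC_inj r s t : injective (@swap_BC r s t).
Proof. by move=> [[[A X] Y] d] [[[A' X'] Y'] d'] [-> -> -> /swap_level_inj ->]. Qed.

Lemma swap_BC_adj r s t : {homo @swap_BC r s t : x y / e3c_adj x y}.
Proof.
move=> [[[A X] Y] d] [[[A' X'] Y'] d']; rewrite /e3c_adj /swap_BC (inj_eq swap_level_inj).
by case: d => [[|[|[|?]]] ?] //; case: d' => [[|[|[|?]]] ?] //=;
  rewrite ?andbF ?orbF //; case/and3P => -> -> ->.
Qed.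

Section Blocks.
Variables r s t : nat.
Local Notation V := (e3c_vertex r s t).
Local Notation adj := (@e3c_adj r s t).

Definition level (x : V) : nat := val x.2.
Definition wordA (x : V) : word r := x.1.1.1.
Definition wordB (x : V) : word s := x.1.1.2.
Definition wordC (x : V) : word t := x.1.2.

Definition liftB (A : word r) (C : word t) (ws : seq (word s)) : seq V :=
  map (fun W => (A, W, C, lev1)) ws.
Definition liftC (A : word r) (B : word s) (ws : seq (word t)) : seq V :=
  map (fun W => (A, B, W, lev0)) ws.

Lemma liftB_walk A B B' C ps : perm_eq ps (iota 0 s) ->
  bounded_walk (A, B, C, lev1) (A, B', C, lev1) s (liftB A C (walk_to B B' ps)).
Proof.
case/(walk_to_perm B B') => p l sz; split; rewrite ?size_map ?last_map ?l //.
by apply: homo_path p => ? ?; apply: adj_B.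
Qed.

Lemma liftC_walk A B C C' ps : perm_eq ps (iota 0 t) ->
  bounded_walk (A, B, C, lev0) (A, B, C', lev0) t (liftC A B (walk_to C C' ps)).
Proof.
case/(walk_to_perm C C') => p l sz; split; rewrite ?size_map ?last_map ?l //.
by apply: homo_path p => ? ?; apply: adj_C.
Qed.

Definition walk_BC A B B' C C' (d' : 'I_3) psB psC : seq V :=
  (A, B, C, lev1) :: liftB A C (walk_to B B' psB) ++
  (A, B', C, lev0) :: liftC A B' (walk_to C C' psC) ++ [:: (A, B', C', d')].

Lemma walk_BC_bounded A B B' C C' (d d' : 'I_3) psB psC :
  perm_eq psB (iota 0 s) -> perm_eq psC (iota 0 t) -> d != lev1 -> lev0 != d' ->
  bounded_walk (A, B, C, d) (A, B', C', d') (s + t + 3) (walk_BC A B B' C C' d' psB psC).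
Proof.
move=> hpsB hpsC hd hd'; rewrite /walk_BC.
apply: bounded_walk_le (_ : (s + (t + 1).+1).+1 <= _) _; first lia.
apply: bounded_walk_cons; first exact: adj_level.
apply: bounded_walk_cat; first exact: liftB_walk.
apply: bounded_walk_cons; first exact: adj_level.
apply: bounded_walk_cat; first exact: liftC_walk.
exact/bounded_walk_edge/adj_level.
Qed.

Lemma mem_walk_BC A B B' C C' d' psB psC x : x \in walk_BC A B B' C C' d' psB psC ->
  wordA x = A /\
  [\/ x = (A, B', C', d'),
      [/\ level x = 1, wordC x = C & wordB x \in B :: walk_to B B' psB]
    | [/\ level x = 0, wordB x = B' & wordC x \in C :: walk_to C C' psC]].
Proof.
move=> hx; rewrite !(inE, mem_cat) in hx; repeat case/orP: hx => hx;
  first [move/eqP: hx => -> | case/mapP: hx => W hW ->];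
  rewrite /level /wordA /wordB /wordC /=; split=> //;
  first [ by constructor 1
        | by constructor 2; split=> //; first [exact: mem_head | apply: mem_behead]
        | by constructor 3; split=> //; first [exact: mem_head | apply: mem_behead]].
Qed.

Lemma mem_walk_BC_levels A B B' C C' d' psB psC x : x \in walk_BC A B B' C C' d' psB psC ->
  x = (A, B', C', d') \/
  (wordA x = A /\ ((level x = 1 /\ wordC x = C) \/ (level x = 0 /\ wordB x = B'))).
Proof.
by case/mem_walk_BC => hA [-> | [? ? _] | [? ? _]];
  [left | right; split=> //; left | right; split=> //; right].
Qed.

End Blocks.

Section FromLevel0ToLevel2.
Variables r s t : nat.
Variables (A : word r) (B B' : word s) (C C' : word t).
Hypotheses (le_rt : r <= t) (neq_B : B != B') (neq_C : C != C').
Local Notation V := (e3c_vertex r s t).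
Local Notation u := ((A, B, C, lev0) : V).
Local Notation v := ((A, B', C', lev2) : V).
Local Notation walkB := (walk_to B B' (iota 0 s)).
Local Notation walkC := (walk_to C C' (iota 0 t)).

Definition walk02_BC : seq V := walk_BC A B B' C C' lev2 (iota 0 s) (iota 0 t).

Definition walk02_CB : seq V :=
  liftC A B walkC ++ (A, B, C', lev1) :: liftB A C' walkB ++ [:: v].

(* All but the first vertices of the k-th walk have A-part nbr A k.  The first
   ones have C-part nbr C k, which keeps them off walk02_CB unless nbr C k is
   the first step of its C-correction; the walk then leaves u through level 2. *)
Definition walk02_nbr k : seq V :=
  let A1 := nbr A k in let C1 := nbr C k in
  if C1 == head C walkC then
    (A, B, C, lev2) :: (A1, B, C, lev2) :: walk_BC A1 B B' C C' lev2 (iota 0 s) (iota 0 t) ++ [:: v]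
  else
    (A, B, C1, lev0) :: (A, B, C1, lev2) :: (A1, B, C1, lev2) ::
    walk_BC A1 B B' C1 C' lev2 (iota 0 s) (iota 0 t) ++ [:: v].

Lemma walk02_BC_bounded : bounded_walk u v (s + t + 7) walk02_BC.
Proof. by apply: bounded_walk_le (walk_BC_bounded _ _ _ _ _ _ _ _ _); rewrite ?leq_add2l. Qed.

Lemma walk02_CB_bounded : bounded_walk u v (s + t + 7) walk02_CB.
Proof.
apply: bounded_walk_le (_ : t + (s + 1).+1 <= _) _; first lia.
apply: bounded_walk_cat; first exact: liftC_walk.
apply: bounded_walk_cons; first exact: adj_level.
apply: bounded_walk_cat; first exact: liftB_walk.
exact/bounded_walk_edge/adj_level.
Qed.

Lemma walk02_nbr_bounded k : k < 2 * r -> bounded_walk u v (s + t + 7) (walk02_nbr k).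
Proof.
move=> hk; have dA := differ1_nbr (leqnn r) A hk.
have back : differ1 (nbr A k) A by rewrite differ1C.
have dC := differ1_nbr le_rt C hk.
rewrite /walk02_nbr; case: ifP => _.
  apply: bounded_walk_le (_ : (s + t + 3 + 1).+2 <= _) _; first lia.
  apply: bounded_walk_cons; first exact: adj_level.
  apply: bounded_walk_cons; first exact: adj_A.
  apply: bounded_walk_cat; first exact: walk_BC_bounded.
  exact/bounded_walk_edge/adj_A.
apply: bounded_walk_le (_ : (s + t + 3 + 1).+3 <= _) _; first lia.
apply: bounded_walk_cons; first exact: adj_C.
apply: bounded_walk_cons; first exact: adj_level.
apply: bounded_walk_cons; first exact: adj_A.
apply: bounded_walk_cat; first exact: walk_BC_bounded.
exact/bounded_walk_edge/adj_A.
Qed.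

Lemma mem_walk02_CB x : x \in walk02_CB ->
  x = v \/ (wordA x = A /\
    ((level x = 0 /\ wordB x = B /\ wordC x \in walkC) \/ (level x = 1 /\ wordC x = C'))).
Proof.
rewrite !(inE, mem_cat) => hx; repeat case/orP: hx => hx;
  first [move/eqP: hx => -> | case/mapP: hx => W hW ->];
  rewrite /level /wordA /wordB /wordC /=;
  first [by left | by right; split=> //; left; do !split | by right; split=> //; right].
Qed.

Lemma mem_walk02_nbr k x : x \in walk02_nbr k -> x = v \/ wordA x = nbr A k \/
  (wordA x = A /\ wordB x = B /\
    ((nbr C k != head C walkC /\ (level x = 0 \/ level x = 2) /\ wordC x = nbr C k) \/
     (nbr C k == head C walkC /\ level x = 2 /\ wordC x = C))).
Proof.
rewrite /walk02_nbr; case: ifP => hC1.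
  rewrite 2!in_cons mem_cat mem_seq1.
  case/or4P => [/eqP -> | /eqP -> | /mem_walk_BC[hA _] | /eqP ->]; try by [left | right; left].
  by right; right; do !split; right; do !split.
rewrite 3!in_cons mem_cat mem_seq1.
case/or4P => [/eqP -> | /eqP -> | /eqP -> | /orP[/mem_walk_BC[hA _] | /eqP ->]];
  try by [left | right; left].
  by right; right; do !split; left; do !split; left.
by right; right; do !split; left; do !split; right.
Qed.

Let neq_B' : B <> B'. Proof. exact/eqP. Qed.
Let neq_C' : C <> C'. Proof. exact/eqP. Qed.
Let nbr_A_neq k : k < 2 * r -> nbr A k <> A.
Proof. by move=> hk; apply/eqP; apply: (nbr_neq (leqnn r)). Qed.
Let nbr_C_neq k : k < 2 * r -> nbr C k <> C.
Proof. by move=> hk; apply/eqP; apply: (nbr_neq le_rt). Qed.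

Let nbr_C_in_walkC k : k < 2 * r -> nbr C k \in walkC -> nbr C k = head C walkC.
Proof.
move=> hk; apply: walk_to_set_letter_head (shift_letter_neq _ _); last exact: half_lt_word hk.
by apply/allP => q; rewrite mem_iota.
Qed.

Lemma disjoint02_BC_CB : internally_disjoint v walk02_BC walk02_CB.
Proof. by move=> x /mem_walk_BC_levels hBC /mem_walk02_CB hCB; intuition; congruence. Qed.

Lemma disjoint02_nbr_BC k : k < 2 * r -> internally_disjoint v (walk02_nbr k) walk02_BC.
Proof.
move=> hk x /mem_walk02_nbr hP /mem_walk_BC_levels hBC; have := nbr_A_neq hk.
by intuition; congruence.
Qed.

Lemma disjoint02_nbr_CB k : k < 2 * r -> internally_disjoint v (walk02_nbr k) walk02_CB.
Proof.
move=> hk x /mem_walk02_nbr hP /mem_walk02_CB hCB; have := nbr_A_neq hk.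
have : nbr C k != head C walkC -> (nbr C k \in walkC) = false.
  by apply: contraNF => /(nbr_C_in_walkC hk) ->.
by intuition; congruence.
Qed.

Lemma disjoint02_nbr k l : k < 2 * r -> l < 2 * r -> k != l ->
  internally_disjoint v (walk02_nbr k) (walk02_nbr l).
Proof.
move=> hk hl /eqP hkl x /mem_walk02_nbr hPk /mem_walk02_nbr hPl.
have := nbr_A_neq hk; have := nbr_A_neq hl; have := nbr_C_neq hk; have := nbr_C_neq hl.
have injA : nbr A k = nbr A l -> k = l := nbr_inj (leqnn r) hk hl.
have injC : nbr C k = nbr C l -> k = l := nbr_inj le_rt hk hl.
intuition; try congruence;
  repeat match goal with H : is_true (_ == _) |- _ => move/eqP: H => H end;
  exfalso; apply: hkl; first [apply: injA; congruence | apply: injC; congruence].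
Qed.

Lemma walk_fan_0_2 : exists P, walk_fan u v (s + t + 7) (2 * r).+2 P.
Proof.
eexists; apply: walk_fan_extend.
- exact: walk02_nbr_bounded.
- exact: walk02_BC_bounded.
- exact: walk02_CB_bounded.
- exact: disjoint02_nbr.
- exact: disjoint02_nbr_BC.
- exact: disjoint02_nbr_CB.
- exact: disjoint02_BC_CB.
Qed.

End FromLevel0ToLevel2.

Section FromLevel0ToLevel1.
Variables r s t : nat.
Variables (A : word r) (B B' : word s) (C C' : word t).
Hypotheses (r_gt0 : 0 < r) (le_rs : r <= s) (le_rt : r <= t).
Hypotheses (neq_B : B != B') (neq_C : C != C').
Local Notation V := (e3c_vertex r s t).
Local Notation u := ((A, B, C, lev0) : V).
Local Notation v := ((A, B', C', lev1) : V).
Local Notation iC := (nbr_index r C C').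
Local Notation iB := (nbr_index r B' B).

(* If nbr C k = C' and nbr B' l = B, a walk through the neighbour C' of C and
   another through the neighbour B of B' would both meet (A, B, C', lev1);
   this transposition makes them the same walk. *)
Definition pair_idx k :=
  if (iC < 2 * r) && (iB < 2 * r) then
    if k == iC then iB else if k == iB then iC else k
  else k.

Lemma pair_idx_lt k : k < 2 * r -> pair_idx k < 2 * r.
Proof. by move=> hk; rewrite /pair_idx; case: ifP => [/andP[? ?] | //]; do ! case: ifP. Qed.

Lemma pair_idx_inj : injective pair_idx.
Proof. by move=> k l; rewrite /pair_idx; case: ifP => // _; do ! case: eqP => ?; lia. Qed.

Lemma pair_idx_C_B k l : k < 2 * r -> l < 2 * r ->
  nbr C k = C' -> nbr B' (pair_idx l) = B -> k = l.
Proof.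
move=> hk hl eC eB; apply: pair_idx_inj.
rewrite -(nbr_indexP le_rs (pair_idx_lt hl) eB) /pair_idx (nbr_indexP le_rt hk eC) hk eqxx.
by rewrite (nbr_indexP le_rs (pair_idx_lt hl) eB) pair_idx_lt.
Qed.

Definition midB k := nbr B' (pair_idx k).

Lemma midB_inj k l : k < 2 * r -> l < 2 * r -> midB k = midB l -> k = l.
Proof. by move=> hk hl /(nbr_inj le_rs (pair_idx_lt hk) (pair_idx_lt hl)) /pair_idx_inj. Qed.

Definition walk01_BC : seq V := walk_BC A B B' C C' lev1 (iota 0 s) (iota 0 t).

Definition walk01_A : seq V :=
  (A, B, C, lev2) :: (nbr A 0, B, C, lev2) ::
  walk_BC (nbr A 0) B B' C C' lev2 (iota 0 s) (iota 0 t) ++ [:: (A, B', C', lev2); v].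

(* The k-th walk starts with C-part nbr C k and ends with B-part midB k;
   correcting the changed letter of B first and that of C last keeps one of
   these tags visible on every vertex. *)
Definition walk01_nbr k : seq V :=
  (A, B, nbr C k, lev0) ::
  walk_BC A B (midB k) (nbr C k) C' lev1
    ((pair_idx k)./2 :: rem (pair_idx k)./2 (iota 0 s)) (rcons (rem k./2 (iota 0 t)) k./2)
  ++ [:: v].

Lemma walk01_BC_bounded : bounded_walk u v (s + t + 7) walk01_BC.
Proof. by apply: bounded_walk_le (walk_BC_bounded _ _ _ _ _ _ _ _ _); rewrite ?leq_add2l. Qed.

Lemma walk01_A_bounded : bounded_walk u v (s + t + 7) walk01_A.
Proof.
have h0 : 0 < 2 * r by rewrite muln_gt0.
have dA := differ1_nbr (leqnn r) A h0.
apply: bounded_walk_le (_ : (s + t + 3 + 2).+2 <= _) _; first lia.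
apply: bounded_walk_cons; first exact: adj_level.
apply: bounded_walk_cons; first exact: adj_A.
apply: bounded_walk_cat; first exact: walk_BC_bounded.
apply: bounded_walk_cons; first by apply: adj_A; rewrite differ1C.
exact/bounded_walk_edge/adj_level.
Qed.

Lemma walk01_nbr_bounded k : k < 2 * r -> bounded_walk u v (s + t + 7) (walk01_nbr k).
Proof.
move=> hk; have hj := half_lt_word le_rs (pair_idx_lt hk); have hi := half_lt_word le_rt hk.
apply: bounded_walk_le (_ : (s + t + 3 + 1).+1 <= _) _; first lia.
apply: bounded_walk_cons; first exact/adj_C/(differ1_nbr le_rt).
apply: bounded_walk_cat.
  by apply: walk_BC_bounded; rewrite ?perm_iota_first ?perm_iota_last.
apply/bounded_walk_edge/adj_B; rewrite differ1C.
exact: (differ1_nbr le_rs _ (pair_idx_lt hk)).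
Qed.

Lemma mem_walk01_A x : x \in walk01_A -> x = v \/ level x = 2 \/ wordA x = nbr A 0.
Proof.
rewrite 2!in_cons mem_cat 2!in_cons mem_seq1.
by case/or4P => [/eqP -> | /eqP -> | /mem_walk_BC[hA _] | /orP[/eqP -> | /eqP ->]];
  rewrite /level /wordA /=; [right; left | right; left | right; right | right; left | left].
Qed.

Lemma mem_walk01_nbr k x : k < 2 * r -> x \in walk01_nbr k -> x = v \/ (wordA x = A /\
  ((level x = 0 /\ wordB x = B /\ wordC x = nbr C k) \/
   (level x = 1 /\ wordC x = nbr C k /\
      (wordB x = B \/ letter (wordB x) (pair_idx k)./2 = letter (midB k) (pair_idx k)./2)) \/
   (level x = 0 /\ wordB x = midB k /\
      (wordC x = C' \/ letter (wordC x) k./2 = letter (nbr C k) k./2)) \/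
   (level x = 1 /\ wordB x = midB k /\ wordC x = C'))).
Proof.
move=> hk; have hj := half_lt_word le_rs (pair_idx_lt hk); have hi := half_lt_word le_rt hk.
rewrite in_cons mem_cat mem_seq1.
case/or3P => [/eqP -> | /mem_walk_BC[hA [-> | [hl hC hB] | [hl hB hC]]] | /eqP ->].
- by right; split=> //; left.
- by right; split=> //; right; right; right.
- right; split=> //; right; left; do !split => //.
  case/predU1P: hB => [-> | hB]; [by left | right].
  exact: letter_walk_to_cons hB.
- right; split=> //; right; right; left; do !split => //.
  case/predU1P: hC => [-> | hC]; [by right | ].
  have notin : k./2 \notin rem k./2 (iota 0 t) by rewrite mem_rem_uniqF ?iota_uniq.
  case: (letter_walk_to_rcons hi notin hC) => [? | ->]; [by right | left].
  by case: (walk_to_perm (nbr C k) C' (perm_iota_last hi)).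
- by left.
Qed.

Let neq_B' : B <> B'. Proof. exact/eqP. Qed.
Let neq_C' : C <> C'. Proof. exact/eqP. Qed.
Let nbr_A0_neq : nbr A 0 <> A.
Proof. by apply/eqP; apply: (nbr_neq (leqnn r)); rewrite muln_gt0. Qed.
Let nbr_C_neq k : k < 2 * r -> nbr C k <> C.
Proof. by move=> hk; apply/eqP; apply: (nbr_neq le_rt). Qed.
Let midB_neq k : k < 2 * r -> midB k <> B'.
Proof. by move=> hk; apply/eqP; apply: (nbr_neq le_rs); apply: pair_idx_lt. Qed.

Lemma disjoint01_BC_A : internally_disjoint v walk01_BC walk01_A.
Proof. by move=> x /mem_walk_BC_levels hBC /mem_walk01_A hA; intuition; congruence. Qed.

Lemma disjoint01_nbr_BC k : k < 2 * r -> internally_disjoint v (walk01_nbr k) walk01_BC.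
Proof.
move=> hk x /(mem_walk01_nbr hk) hP /mem_walk_BC_levels hBC.
have := nbr_C_neq hk; have := midB_neq hk.
by intuition; congruence.
Qed.

Lemma disjoint01_nbr_A k : k < 2 * r -> internally_disjoint v (walk01_nbr k) walk01_A.
Proof. by move=> hk x /(mem_walk01_nbr hk) hP /mem_walk01_A hA; intuition; congruence. Qed.

Lemma disjoint01_nbr k l : k < 2 * r -> l < 2 * r -> k != l ->
  internally_disjoint v (walk01_nbr k) (walk01_nbr l).
Proof.
move=> hk hl /eqP hkl x /(mem_walk01_nbr hk) hPk /(mem_walk01_nbr hl) hPl.
have injC : nbr C k = nbr C l -> k = l := nbr_inj le_rt hk hl.
have injB : midB k = midB l -> k = l := midB_inj hk hl.
have CB_kl : nbr C k = C' -> midB l = B -> k = l := pair_idx_C_B hk hl.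
have CB_lk : nbr C l = C' -> midB k = B -> k = l.
  by move=> eC eB; apply/esym/(pair_idx_C_B hl hk).
have letC_kl : letter (nbr C k) l./2 = letter (nbr C l) l./2 -> k = l := letter_nbr_inj le_rt hk hl.
have letC_lk : letter (nbr C l) k./2 = letter (nbr C k) k./2 -> k = l.
  by move/(letter_nbr_inj le_rt hl hk).
have letB_kl : letter (midB l) (pair_idx k)./2 = letter (midB k) (pair_idx k)./2 -> k = l.
  by move/(letter_nbr_inj le_rs (pair_idx_lt hl) (pair_idx_lt hk))/pair_idx_inj.
have letB_lk : letter (midB k) (pair_idx l)./2 = letter (midB l) (pair_idx l)./2 -> k = l.
  by move/(letter_nbr_inj le_rs (pair_idx_lt hk) (pair_idx_lt hl))/pair_idx_inj.
have := nbr_C_neq hk; have := nbr_C_neq hl; have := midB_neq hk; have := midB_neq hl.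
intuition; try congruence; exfalso; apply: hkl;
  first [ apply: injC; congruence | apply: injB; congruence
        | apply: CB_kl; congruence | apply: CB_lk; congruence
        | apply: letC_kl; congruence | apply: letC_lk; congruence
        | apply: letB_kl; congruence | apply: letB_lk; congruence ].
Qed.

Lemma walk_fan_0_1 : exists P, walk_fan u v (s + t + 7) (2 * r).+2 P.
Proof.
eexists; apply: walk_fan_extend.
- exact: walk01_nbr_bounded.
- exact: walk01_BC_bounded.
- exact: walk01_A_bounded.
- exact: disjoint01_nbr.
- exact: disjoint01_nbr_BC.
- exact: disjoint01_nbr_A.
- exact: disjoint01_BC_A.
Qed.

End FromLevel0ToLevel1.

Lemma walk_fan_from_level0 r s t A B B' C C' (d' : 'I_3) :
  0 < r -> r <= s -> r <= t -> B != B' -> C != C' -> d' != lev0 ->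
  exists P, walk_fan ((A, B, C, lev0) : e3c_vertex r s t) (A, B', C', d') (s + t + 7) (2 * r).+2 P.
Proof.
move=> r_gt0 le_rs le_rt neq_B neq_C.
by case: (lev_cases d') => -> // _; [apply: walk_fan_0_1 | apply: walk_fan_0_2].
Qed.

Lemma walk_fan_from_level1 r s t A B B' C C' (d' : 'I_3) :
  0 < r -> r <= s -> r <= t -> B != B' -> C != C' -> d' != lev1 ->
  exists P, walk_fan ((A, B, C, lev1) : e3c_vertex r s t) (A, B', C', d') (s + t + 7) (2 * r).+2 P.
Proof.
move=> r_gt0 le_rs le_rt neq_B neq_C hd'.
have hd : swap_level d' != lev0 by rewrite -[lev0]/(swap_level lev1) (inj_eq swap_level_inj).
have [P fanP] := walk_fan_from_level0 A r_gt0 le_rt le_rs neq_C neq_B hd.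
exists (fun k => map (@swap_BC r s t) (P k)).
move: (walk_fan_map (@swap_BC_inj r s t) (@swap_BC_adj r s t) fanP).
by rewrite /= swap_levelK (addnC t s).
Qed.

Lemma path_fan_E3C r s t A B B' C C' (d d' : 'I_3) :
  0 < r -> r <= s -> r <= t -> B != B' -> C != C' -> d != d' ->
  exists P, path_fan ((A, B, C, d) : e3c_vertex r s t) (A, B', C', d') (s + t + 7) (2 * r).+2 P.
Proof.
move=> r_gt0 le_rs le_rt neq_B neq_C; case: (lev_cases d) => ->; rewrite eq_sym => hd.
- have [P /walk_fan_shorten fanP] := walk_fan_from_level0 A r_gt0 le_rs le_rt neq_B neq_C hd.
  by eexists; apply: fanP.
- have [P /walk_fan_shorten fanP] := walk_fan_from_level1 A r_gt0 le_rs le_rt neq_B neq_C hd.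
  by eexists; apply: fanP.
rewrite eq_sym in neq_B; rewrite eq_sym in neq_C.
have [P /walk_fan_shorten/path_fan_rev fanP] :
    exists P, walk_fan ((A, B', C', d') : e3c_vertex r s t) (A, B, C, lev2)
                       (s + t + 7) (2 * r).+2 P.
  case: (lev_cases d') hd => -> hd; last by rewrite eqxx in hd.
    by apply: walk_fan_from_level0.
  by apply: walk_fan_from_level1.
by eexists; apply: fanP; apply: contra neq_B => /eqP[->].
Qed.

Theorem lemma17 (r s t : nat) (A A' : word r) (B B' : word s) (C C' : word t)
    (d d' : 'I_3) :
  1 <= r -> r <= s -> s <= t ->
  A = A' -> B != B' -> C != C' -> d != d' ->
  exists P : 'I_(2 * r + 2) -> seq (e3c_vertex r s t),
    (forall i, is_uv_path (A, B, C, d) (A', B', C', d') (P i)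
               /\ size (P i) <= s + t + 7) /\
    (forall i j, i != j -> internally_disjoint (A', B', C', d') (P i) (P j)).
Proof.
move=> r_gt0 le_rs le_st <- neq_B neq_C neq_d.
have [P [paths disj]] := path_fan_E3C A r_gt0 le_rs (leq_trans le_rs le_st) neq_B neq_C neq_d.
have lt_ord (i : 'I_(2 * r + 2)) : i < (2 * r).+2 by rewrite -[(2 * r).+2]addn2.
exists (fun i => P i); split=> [i | i j ij]; first exact: paths (lt_ord i).
exact: disj (lt_ord i) (lt_ord j) ij.
Qed.
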